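(* For any continuous function $f\in C(\Omega)$: \[ |f|_{\infty} \;\geq\; \sup_{g\in L^2(\mu),\ |g|=1} \big| f\,(g\circ\sigma) \big| \;\geq\; |L f|_{\infty}. \] Furthermore, if $f\in C(\Omega)$ does not depend on the first coordinate (that is, if $f$ is $\sigma^{-1}(\mathfrak{B})$-measurable, where $\mathfrak{B}$ is the Borel sigma-algebra of $\Omega$), then both inequalities in the display above are equalities.
   Context: Let $\Omega=\{0,1\}^{\mathbb{N}}$ with the shift map $\sigma$, and let $\mu$ be the measure of maximal entropy for $\sigma$. For $x\in\Omega$ and $a\in\{0,1\}$, $ax$ denotes the sequence obtained by concatenating the symbol $a$ to the left of $x$. The Ruelle operator $L: L^2(\mu)\to L^2(\mu)$ is given by $L(g)(x)=\frac{1}{2}\big(g(0x)+g(1x)\big)$, and the Koopman operator $K=L^{\dagger}$ is given by $K(g)=g\circ\sigma$. Here $|\cdot|$ denotes the $L^2(\mu)$-norm and $|\cdot|_{\infty}$ the supremum norm; $f$ denotes a continuous real function and $g$ a square-integrable function. *)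

From HB Require Import structures.
From mathcomp Require Import all_boot all_order all_algebra.
From mathcomp Require Import all_classical all_reals all_analysis.
Set Implicit Arguments. Unset Strict Implicit. Unset Printing Implicit Defensive.
Import Order.TTheory GRing.Theory Num.Theory.
Import numFieldNormedType.Exports.
Local Open Scope classical_set_scope.
Local Open Scope ring_scope.

(* Omega = {0,1}^N (false = 0, true = 1), with the Borel sigma-algebra
   of the product topology (cantor_space). *)
Definition Omega : Type := g_sigma_algebraType (@open cantor_space).

Definition shift (x : nat -> bool) : nat -> bool := fun n => x n.+1.

Definition scons (a : bool) (x : nat -> bool) : nat -> bool :=
  fun n => if n is k.+1 then x k else a.

Definition cylinder (w : seq bool) : set Omega :=
  [set x | forall i, (i < size w)%N -> x i = nth false w i].

(* mu is the measure of maximal entropy of the full 2-shift, i.e. the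
   (1/2,1/2)-Bernoulli measure: every cylinder of length n has measure 2^-n.
   (This determines mu uniquely on the Borel sigma-algebra.) *)
Definition max_entropy_measure {R : realType}
    (mu : {measure set Omega -> \bar R}) : Prop :=
  forall w : seq bool, mu (cylinder w) = ((2%:R : R) ^- size w)%:E.

Definition ruelle {R : realType} (g : (nat -> bool) -> R) : (nat -> bool) -> R :=
  fun x => (g (scons false x) + g (scons true x)) / 2%:R.

Definition supnorm {R : realType} (f : (nat -> bool) -> R) : \bar R :=
  ereal_sup (range (fun x => (`|f x|)%:E)).

Definition L2norm {R : realType} (mu : {measure set Omega -> \bar R})
    (g : Omega -> R) : \bar R :=
  Lnorm mu 2%:E (EFin \o g).

Definition koopman_mult_norm {R : realType} (mu : {measure set Omega -> \bar R})
    (f : (nat -> bool) -> R) : \bar R :=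
  ereal_sup [set L2norm mu (fun x : Omega => f x * g (shift x)) | g in
     [set g : Omega -> R | measurable_fun [set: Omega] g /\ L2norm mu g = 1%E]].

Definition indep_first {R : realType} (f : (nat -> bool) -> R) : Prop :=
  forall x y : nat -> bool, shift x = shift y -> f x = f y.

(* The shift preserves mu: mu and its push-forward both give measure 2^-n to
   every cylinder of length n, and cylinders form a pi-system generating the
   Borel sets.  Hence |f (g o sigma)| <= |f|_oo |g o sigma| = |f|_oo |g|.
   For the lower bound at x, the normalised indicator g = 2^(n/2) 1_[x_0..x_(n-1)]
   is a unit vector, and g o sigma equals 2^(n/2) on the two cylinders
   [0 x_0..x_(n-1)] and [1 x_0..x_(n-1)], each of measure 2^-(n+1).  For n
   large, continuity keeps |f| above |f(0x)| - e and |f(1x)| - e on them, so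
   |f (g o sigma)| is at least the quadratic mean of these two numbers, which
   dominates their arithmetic mean and hence |L f (x)| - e.  When f ignores
   the first coordinate, L f (x) = f (0x) and f y = L f (sigma y), so
   |L f|_oo = |f|_oo and the chain collapses. *)

From Pilot Require Import Defs.
From HB Require Import structures.
From mathcomp Require Import all_boot all_order all_algebra.
From mathcomp Require Import all_classical all_reals all_analysis measurable_realfun.
From mathcomp Require Import ring lra.
Set Implicit Arguments.
Unset Strict Implicit.
Unset Printing Implicit Defensive.

Import Order.TTheory GRing.Theory Num.Theory.
Import numFieldNormedType.Exports.
Local Open Scope classical_set_scope.
Local Open Scope ring_scope.

(* MathComp-Analysis exports its own [shift] (translation in a zmodule),
   which would otherwise capture the name. *)
Local Notation shift := Defs.shift.

Lemma cylinder_mkseqP (x y : nat -> bool) n :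
  cylinder (mkseq x n) y <-> forall i, (i < n)%N -> y i = x i.
Proof.
rewrite /cylinder /= size_mkseq.
by split=> h i ilt; rewrite h // nth_mkseq.
Qed.

Lemma mkseq_scons b (x : nat -> bool) n : mkseq (scons b x) n.+1 = b :: mkseq x n.
Proof. by rewrite /mkseq /= -[1%N]/(1 + 0)%N iotaDl -map_comp. Qed.

Lemma cylinder_mkseq_le (x : nat -> bool) m n : (m <= n)%N ->
  cylinder (mkseq x n) `<=` cylinder (mkseq x m).
Proof.
move=> mn y /cylinder_mkseqP yx; apply/cylinder_mkseqP => i im.
exact/yx/(leq_trans im).
Qed.

Lemma cylinder_cons_disjoint (w : seq bool) :
  cylinder (false :: w) `&` cylinder (true :: w) = set0.
Proof. by apply/seteqP; split => // y [/(_ 0%N erefl) y0 /(_ 0%N erefl)]; rewrite y0. Qed.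

Lemma shift_preimage_cylinder (w : seq bool) :
  (shift : Omega -> Omega) @^-1` cylinder w = cylinder (false :: w) `|` cylinder (true :: w).
Proof.
apply/seteqP; split => y; last by case=> yw i iw; exact: (yw i.+1 iw).
move=> yw; case: (boolP (y 0%N)) => [|/negbTE] y0; [right|left] => -[|i] //= iw; exact: yw.
Qed.

Lemma cvg_cylinder (x : cantor_space) (y : nat -> cantor_space) :
  (forall n, cylinder (mkseq x n) (y n)) -> y @ \oo --> x.
Proof.
move=> yx; apply/cvg_sup => N U [V] [[W] oW <-] WxN WU.
apply: (filterS WU); exists N.+1 => // n /= Nn.
by rewrite /= ((cylinder_mkseqP _ _ _).1 (yx n)).
Qed.

Lemma nbhs_cylinder (x : cantor_space) (U : set cantor_space) :
  nbhs x U -> exists n, cylinder (mkseq x n) `<=` U.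
Proof.
move=> xU; apply: contrapT => /forallNP noncyl.
have /choice[y yP] n : exists y, cylinder (mkseq x n) y /\ ~ U y.
  by have /existsNP[y /not_implyP] := noncyl n; exists y.
have [N _ /(_ N (leqnn N)) UyN] := cvg_cylinder (fun n => (yP n).1) xU.
exact: (yP N).2 UyN.
Qed.

Lemma measurable_coord i (b : bool) : measurable [set x : Omega | x i = b].
Proof.
have /continuousP coord_cont : continuous (fun x : cantor_space => x i).
  exact: proj_continuous.
by apply: sub_sigma_algebra; apply: (coord_cont [set b]); exact: discrete_open.
Qed.

Lemma cylinder_nil : cylinder [::] = setT.
Proof. by apply/seteqP; split. Qed.

Lemma measurable_cylinder (w : seq bool) : measurable (cylinder w).
Proof.
case: w => [|b w]; first by rewrite cylinder_nil.
by apply: bigcap_measurable; [exists 0%N | move=> i _; exact: measurable_coord].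
Qed.

Lemma measurable_continuous (R : realType) (f : cantor_space -> R) :
  continuous f -> measurable_fun [set: Omega] (f : Omega -> R).
Proof.
move=> /continuousP cf.
apply: (measurability _ (RGenOpens.measurableE R)).
move=> _ [_ [a [b ->] <-]]; rewrite setTI; apply: sub_sigma_algebra.
exact/cf/interval_open.
Qed.

(* [set0] makes the family closed under intersection. *)
Definition cylinders : set (set Omega) :=
  [set A | A = set0 \/ exists w, A = cylinder w].

Lemma setI_closed_cylinders : setI_closed cylinders.
Proof.
move=> A B [->|[w1 ->]]; first by rewrite set0I; left.
move=> [->|[w2 ->]]; first by rewrite setI0; left.
wlog le12 : w1 w2 / (size w1 <= size w2)%N.
  move=> wlog_le; have [|/ltnW] := leqP (size w1) (size w2); first exact: wlog_le.
  by rewrite setIC; exact: wlog_le.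
have [agree|disagree] :=
  pselect (forall i, (i < size w1)%N -> nth false w1 i = nth false w2 i).
  right; exists w2; apply/seteqP; split => [x [] //|x xw2]; split => // i iw1.
  by rewrite agree // xw2 //; exact: leq_trans iw1 le12.
left; apply/seteqP; split => // x [xw1 xw2]; apply: disagree => i iw1.
by rewrite -xw1 // xw2 //; exact: leq_trans iw1 le12.
Qed.

Lemma measurable_cylindersE : @measurable _ Omega = <<s cylinders >>.
Proof.
rewrite eqEsubset; split => A; last first.
  apply: smallest_sub; first exact: smallest_sigma_algebra.
  by move=> _ [->|[w ->]]; [exact: measurable0 | exact: measurable_cylinder].
apply: smallest_sub; first exact: smallest_sigma_algebra.
move=> U oU.
have -> : U = \bigcup_(w in [set w | cylinder w `<=` U]) cylinder w.
  apply/seteqP; split => [x Ux|x [w wU /wU] //].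
  have := oU; rewrite openE => /(_ x Ux) /nbhs_cylinder [n xU].
  by exists (mkseq x n) => //; exact/cylinder_mkseqP.
rewrite bigcup_mkcond.
apply: (@countable_bigcupT_measurable _ (g_sigma_algebraType cylinders)).
  exact: countableP.
by move=> w; case: ifP => _; apply: sub_sigma_algebra; [right; exists w | left].
Qed.

Lemma measurable_shift : measurable_fun [set: Omega] (shift : Omega -> Omega).
Proof.
apply: (measurability _ measurable_cylindersE) => _ [A [->|[w ->]] <-].
  by rewrite preimage_set0 setI0.
rewrite setTI shift_preimage_cylinder.
by apply: measurableU; exact: measurable_cylinder.
Qed.

Lemma integral_mulr_indic d (T : measurableType d) (R : realType)
    (mu : {measure set T -> \bar R}) (k : R) (A : set T) :
  0 <= k -> measurable A -> (\int[mu]_x (k * \1_A x)%:E = k%:E * mu A)%E.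
Proof.
move=> k0 mA; rewrite (integralZl_indic _ (fun=> A)) //; last by rewrite ltNge k0.
by rewrite integral_indic // setIT.
Qed.

Section shift_invariance.
Variables (R : realType) (mu : {measure set Omega -> \bar R}).
Hypothesis hmu : max_entropy_measure mu.

Lemma measure_shift_preimage_cylinder (w : seq bool) :
  mu ((shift : Omega -> Omega) @^-1` cylinder w) = mu (cylinder w).
Proof.
rewrite shift_preimage_cylinder measureU ?cylinder_cons_disjoint //;
  try exact: measurable_cylinder.
(* [measureU] states the sum for [mu] seen as a content, where [rewrite hmu]
   does not match. *)
rewrite (_ : _ + _ = (2 ^- (size w).+1)%:E + (2 ^- (size w).+1)%:E)%E; last first.
  by congr (_ + _)%E; exact: hmu.
rewrite hmu -EFinD; congr EFin.
by rewrite exprS invfM -mulrDl -div1r -splitr mul1r.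
Qed.

Lemma measure_shift_preimage (A : set Omega) :
  measurable A -> mu ((shift : Omega -> Omega) @^-1` A) = mu A.
Proof.
(* The push-forward is a measure only under the hypothesis [mshift], which the
   remaining goals carry. *)
apply: (measure_unique cylinders (fun=> setT) measurable_cylindersE
  setI_closed_cylinders _ _ (pushforward mu (shift : Omega -> Omega))) => //.
- by move=> _; right; exists [::]; rewrite cylinder_nil.
- by rewrite bigcup_const.
- exact: measurable_shift.
- move=> mshift _ [->|[w ->]]; first by rewrite !measure0.
  exact: measure_shift_preimage_cylinder.
- by move=> mshift _; rewrite /= /pushforward preimage_setT -cylinder_nil hmu ltry.
Qed.

Lemma integral_shift (F : Omega -> \bar R) :
  measurable_fun [set: Omega] F -> (forall x, (0 <= F x)%E) ->
  (\int[mu]_x F (shift x) = \int[mu]_x F x)%E.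
Proof.
move=> mF F0.
have := ge0_integral_pushforward measurable_shift mu measurableT mF (fun y _ => F0 y).
rewrite preimage_setT => <-; apply: eq_measure_integral; first exact: measurable_shift.
by move=> mshift A mA _; exact: measure_shift_preimage.
Qed.

End shift_invariance.

Lemma indic_setU_disjoint (T : Type) (R : pzRingType) (A B : set T) :
  A `&` B = set0 -> \1_(A `|` B) = \1_A \+ \1_B :> (T -> R).
Proof.
move=> AB; apply/funext => x /=; rewrite !indicE in_setU.
case: (boolP (x \in A)) => xA; case: (boolP (x \in B)) => xB /=; rewrite ?addr0 ?add0r //.
have : (A `&` B) x by split; exact/set_mem.
by rewrite AB.
Qed.

Lemma expr2_indic (T : Type) (R : pzRingType) (A : set T) (x : T) :
  (\1_A x : R) ^+ 2 = \1_A x.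
Proof. by rewrite indicE; case: (x \in A); rewrite ?expr1n ?expr0n. Qed.

Lemma ler_mulr_indic (T : Type) (R : numDomainType) (A : set T) (a : R) (h : T -> R) :
  (forall y, A y -> a <= h y) -> forall y, a * \1_A y <= h y * \1_A y.
Proof.
move=> ah y; rewrite indicE.
by case: (boolP (y \in A)) => [/set_mem/ah|_]; rewrite ?mulr1 ?mulr0.
Qed.

Lemma mean_le_sqrt_mean_sqr (R : rcfType) (a b : R) :
  (a + b) / 2 <= Num.sqrt ((a ^+ 2 + b ^+ 2) / 2).
Proof.
apply: le_trans (ler_norm _) _; rewrite -sqrtr_sqr ler_wsqrtr //.
rewrite -subr_ge0 (_ : _ - _ = ((a - b) / 2) ^+ 2); first exact: sqr_ge0.
by field.
Qed.

Section L2norm.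
Variables (R : realType) (mu : {measure set Omega -> \bar R}).

Lemma L2normE (g : Omega -> R) :
  L2norm mu g = sqrte (\int[mu]_x ((g x) ^+ 2)%:E)%E.
Proof.
rewrite /L2norm unlock /= poweR12_sqrt; last first.
  by apply: integral_ge0 => x _; rewrite lee_fin powR_ge0.
congr sqrte; apply: eq_integral => x _ /=.
by rewrite -[2%R]/(2%:R) powR_mulrn // real_normK // num_real.
Qed.

Lemma le_L2norm (g h : Omega -> R) :
  measurable_fun [set: Omega] g -> measurable_fun [set: Omega] h ->
  (forall x, `|g x| <= `|h x|) -> (L2norm mu g <= L2norm mu h)%E.
Proof.
move=> mg mh gh; rewrite !L2normE lee_sqrt; last first.
  by apply: integral_ge0 => x _; rewrite lee_fin sqr_ge0.
apply: ge0_le_integral => //.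
- by move=> x _; rewrite lee_fin sqr_ge0.
- exact/measurable_EFinP/measurable_funX.
- exact/measurable_EFinP/measurable_funX.
move=> x _; rewrite lee_fin -[g x ^+ 2]real_normK ?num_real //.
by rewrite -[h x ^+ 2]real_normK ?num_real // ler_sqr ?nnegrE.
Qed.

Lemma L2normZ (c : R) (g : Omega -> R) : 0 <= c -> measurable_fun [set: Omega] g ->
  L2norm mu (fun x => c * g x) = (c%:E * L2norm mu g)%E.
Proof.
move=> c0 mg; rewrite !L2normE.
under eq_integral do rewrite exprMn EFinM.
rewrite ge0_integralZl_EFin ?sqr_ge0 //; last 2 first.
- by move=> x _; rewrite lee_fin sqr_ge0.
- exact/measurable_EFinP/measurable_funX.
by rewrite sqrteM ?lee_fin ?sqr_ge0 // EFin_expe sqrte_sqr abse_EFin ger0_norm.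
Qed.

Lemma L2norm_indic (A : set Omega) : measurable A ->
  L2norm mu \1_A = sqrte (mu A).
Proof.
move=> mA; rewrite L2normE; congr sqrte.
under eq_integral do rewrite expr2_indic.
by rewrite integral_indic // setIT.
Qed.

Lemma L2norm_indicD (a b : R) (A B : set Omega) :
  measurable A -> measurable B -> A `&` B = set0 ->
  L2norm mu (fun x => a * \1_A x + b * \1_B x) =
  sqrte ((a ^+ 2)%:E * mu A + (b ^+ 2)%:E * mu B)%E.
Proof.
move=> mA mB AB; rewrite L2normE; congr sqrte.
have sqr_step x : (a * \1_A x + b * \1_B x) ^+ 2 = a ^+ 2 * \1_A x + b ^+ 2 * \1_B x.
  have cross : \1_A x * \1_B x = 0 :> R.
    by rewrite -[LHS]/((\1_A \* \1_B) x) -indicI AB indic0.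
  by rewrite sqrrD !exprMn !expr2_indic mulrACA cross mulr0 mul0rn addr0.
under eq_integral do rewrite sqr_step EFinD.
rewrite ge0_integralD //; last 4 first.
- by move=> x _; rewrite lee_fin mulr_ge0 ?sqr_ge0.
- exact/measurable_EFinP/measurable_funM.
- by move=> x _; rewrite lee_fin mulr_ge0 ?sqr_ge0.
- exact/measurable_EFinP/measurable_funM.
by rewrite !integral_mulr_indic ?sqr_ge0.
Qed.

Hypothesis hmu : max_entropy_measure mu.

Lemma L2norm_comp_shift (g : Omega -> R) : measurable_fun [set: Omega] g ->
  L2norm mu (fun x => g (shift x)) = L2norm mu g.
Proof.
move=> mg; rewrite !L2normE (@integral_shift _ _ hmu (fun y => (g y ^+ 2)%:E)) //.
- exact/measurable_EFinP/measurable_funX.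
- by move=> x; rewrite lee_fin sqr_ge0.
Qed.

End L2norm.

Lemma indic_shift_cylinder (R : pzRingType) (w : seq bool) (y : Omega) :
  \1_(cylinder w) (shift y) =
  \1_(cylinder (false :: w)) y + \1_(cylinder (true :: w)) y :> R.
Proof.
rewrite -[LHS]/(\1_((shift : Omega -> Omega) @^-1` cylinder w) y).
by rewrite shift_preimage_cylinder indic_setU_disjoint ?cylinder_cons_disjoint.
Qed.

Lemma cylinder_norm_ge (R : realType) (f : cantor_space -> R) (x : cantor_space) (d : R) :
  continuous f -> 0 < d ->
  exists n, forall y, cylinder (mkseq x n) y -> `|f x| - d <= `|f y|.
Proof.
move=> hf d0; have [n near_x] := nbhs_cylinder (cvgr_dist_lt _ _ (hf x) _ d0).
exists n => y /near_x /ltW fxy.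
have := ler_normD (f y) (f x - f y); rewrite addrC subrK.
lra.
Qed.

Definition normed_cylinder_indic (R : realType) (w : seq bool) : Omega -> R :=
  fun y => Num.sqrt (2 ^+ size w) * \1_(cylinder w) y.

Lemma measurable_normed_cylinder_indic (R : realType) (w : seq bool) :
  measurable_fun [set: Omega] (normed_cylinder_indic R w).
Proof. by apply: measurable_funM => //; exact: measurable_indic (measurable_cylinder w). Qed.

Section lower_bound.
Variables (R : realType) (mu : {measure set Omega -> \bar R}).
Hypothesis hmu : max_entropy_measure mu.

Lemma L2norm_normed_cylinder_indic (w : seq bool) :
  L2norm mu (normed_cylinder_indic R w) = 1%E.
Proof.
rewrite L2normZ ?sqrtr_ge0 //; last exact: measurable_indic (measurable_cylinder w).
rewrite L2norm_indic ?hmu /=; last exact: measurable_cylinder.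
by rewrite -EFinM -sqrtrM ?exprn_ge0 // mulfV ?sqrtr1 // expf_neq0 ?pnatr_eq0.
Qed.

Lemma L2norm_mul_shift_normed_cylinder_indic_ge (f : Omega -> R) (w : seq bool) (a b : R) :
  measurable_fun [set: Omega] f -> 0 <= a -> 0 <= b ->
  (forall y, cylinder (false :: w) y -> a <= `|f y|) ->
  (forall y, cylinder (true :: w) y -> b <= `|f y|) ->
  (((a + b) / 2)%:E <=
   L2norm mu (fun y => f y * normed_cylinder_indic R w (shift y))%R)%E.
Proof.
move=> mf a0 b0 fa fb; pose s := Num.sqrt (2 ^+ size w : R).
have s0 : 0 <= s := sqrtr_ge0 _.
have mC b : measurable (cylinder (b :: w)) := measurable_cylinder _.
have step_le : (L2norm mu (fun y => s * a * \1_(cylinder (false :: w)) y +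
                                   s * b * \1_(cylinder (true :: w)) y)%R
    <= L2norm mu (fun y => f y * normed_cylinder_indic R w (shift y))%R)%E.
  apply: le_L2norm => [||y].
  - by apply: measurable_funD; apply: measurable_funM => //; exact: measurable_indic.
  - exact: measurable_funM mf
      (measurableT_comp (measurable_normed_cylinder_indic w) measurable_shift).
  rewrite /normed_cylinder_indic indic_shift_cylinder -/s.
  have := ler_mulr_indic fa y; have := ler_mulr_indic fb y.
  set i0 := \1_(cylinder (false :: w)) y; set i1 := \1_(cylinder (true :: w)) y.
  have [i00 i10] : 0 <= i0 /\ 0 <= i1 by rewrite /i0 /i1 !indicE.
  move=> fb_y fa_y; rewrite -!mulrA -mulrDr !normrM [`|s|]ger0_norm //.
  rewrite [`|_ + _|]ger0_norm ?addr_ge0 ?mulr_ge0 // [`|i0 + i1|]ger0_norm ?addr_ge0 //.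
  rewrite mulrCA; apply: ler_wpM2l => //.
  by rewrite mulrDr; exact: lerD.
rewrite L2norm_indicD ?cylinder_cons_disjoint // in step_le.
apply: le_trans step_le; rewrite !hmu /= lee_fin.
rewrite (_ : (s * a) ^+ 2 / _ + _ = (a ^+ 2 + b ^+ 2) / 2).
  exact: mean_le_sqrt_mean_sqr.
rewrite !exprMn sqr_sqrtr ?exprn_ge0 // [2 ^+ _.+1]exprS.
by field; rewrite expf_neq0 ?pnatr_eq0.
Qed.

End lower_bound.

Section norm_comparison.
Variables (R : realType) (mu : {measure set Omega -> \bar R}).
Hypothesis hmu : max_entropy_measure mu.

Lemma L2norm_mul_shift_le (f g : Omega -> R) (m : R) :
  measurable_fun [set: Omega] f -> measurable_fun [set: Omega] g ->
  (forall y, `|f y| <= m) -> L2norm mu g = 1%E ->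
  (L2norm mu (fun y => f y * g (shift y))%R <= m%:E)%E.
Proof.
move=> mf mg fm g1; have m0 : 0 <= m := le_trans (normr_ge0 _) (fm (fun=> false)).
have mgs := measurableT_comp mg measurable_shift.
apply: (@le_trans _ _ (L2norm mu (fun y => m * g (shift y))%R)).
  apply: le_L2norm => [||y]; [exact: measurable_funM | exact: measurable_funM |].
  by rewrite !normrM [`|m|]ger0_norm // ler_wpM2r.
by rewrite L2normZ // L2norm_comp_shift // g1 mule1.
Qed.

Lemma ruelle_le_L2norm_mul_shift (f : cantor_space -> R) (x : cantor_space) (d : R) :
  continuous f -> 0 < d -> exists w,
  (`|ruelle f x|%:E <=
   L2norm mu (fun y => f y * normed_cylinder_indic R w (shift y))%R + d%:E)%E.
Proof.
move=> hf d0; pose lower b := Num.max (`|f (scons b x)| - d) 0.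
have [n0 near0] := cylinder_norm_ge (scons false x) hf d0.
have [n1 near1] := cylinder_norm_ge (scons true x) hf d0.
pose w := mkseq x (maxn n0 n1); exists w.
have lowerP b nb : (nb <= maxn n0 n1)%N ->
    (forall y, cylinder (mkseq (scons b x) nb) y -> `|f (scons b x)| - d <= `|f y|) ->
    forall y, cylinder (b :: w) y -> lower b <= `|f y|.
  move=> le_nb near_b y; rewrite -mkseq_scons => /(cylinder_mkseq_le (leqW le_nb)).
  by move=> /near_b; rewrite ge_max normr_ge0 andbT.
have lower_ge0 b : 0 <= lower b by rewrite le_max lexx orbT.
have lowerD b : `|f (scons b x)| <= lower b + d by rewrite -lerBlDr le_max lexx.
have := L2norm_mul_shift_normed_cylinder_indic_ge hmu (measurable_continuous hf)
  (lower_ge0 false) (lower_ge0 true)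
  (lowerP false n0 (leq_maxl _ _) near0) (lowerP true n1 (leq_maxr _ _) near1).
move=> /(leeD2r d%:E); apply: le_trans; rewrite -EFinD lee_fin /ruelle.
move: (lowerD false) (lowerD true); rewrite !ler_norml => /andP[? ?] /andP[? ?].
by apply/andP; split; lra.
Qed.

Lemma koopman_mult_norm_le_supnorm (f : cantor_space -> R) :
  continuous f -> (koopman_mult_norm mu f <= supnorm f)%E.
Proof.
move=> hf; apply: ge_ereal_sup => _ [g [mg g1] <-].
have ub y : (`|f y|%:E <= supnorm f)%E by apply: ereal_sup_ubound; exists y.
case E : (supnorm f) => [m| |]; last 2 first.
- exact: leey.
- by have := ub (fun=> false); rewrite E leeNy_eq.
apply: L2norm_mul_shift_le (measurable_continuous hf) mg _ g1 => y.
by have := ub y; rewrite E lee_fin.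
Qed.

Lemma supnorm_ruelle_le_koopman_mult_norm (f : cantor_space -> R) :
  continuous f -> (supnorm (ruelle f) <= koopman_mult_norm mu f)%E.
Proof.
move=> hf; apply: ge_ereal_sup => _ [x _ <-]; apply/lee_addgt0Pr => d d0.
have [w Lfx] := ruelle_le_L2norm_mul_shift x hf d0.
apply: le_trans Lfx _; apply: leeD2r; apply: ereal_sup_ubound.
exists (normed_cylinder_indic R w) => //; split.
- exact: measurable_normed_cylinder_indic.
- exact: L2norm_normed_cylinder_indic.
Qed.

End norm_comparison.

Lemma supnorm_ruelle_indep_first (R : realType) (f : (nat -> bool) -> R) :
  indep_first f -> supnorm (ruelle f) = supnorm f.
Proof.
move=> indep; have ruelleE x : ruelle f x = f (scons false x).
  by rewrite /ruelle (indep (scons true x) (scons false x)) //; field.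
rewrite /supnorm; congr ereal_sup; apply/seteqP; split => _ [y _ <-].
  by exists (scons false y) => //; rewrite ruelleE.
by exists (shift y) => //; rewrite ruelleE (indep (scons false (shift y)) y).
Qed.

Local Open Scope ereal_scope.

Theorem lemma2p14 (R : realType) (mu : {measure set Omega -> \bar R})
    (hmu : max_entropy_measure mu)
    (f : cantor_space -> R) (hf : continuous f) :
  (supnorm f >= koopman_mult_norm mu f /\
   koopman_mult_norm mu f >= supnorm (ruelle f)) /\
  (indep_first f ->
     supnorm f = koopman_mult_norm mu f /\
     koopman_mult_norm mu f = supnorm (ruelle f)).
Proof.
have le_sup := koopman_mult_norm_le_supnorm hmu hf.
have ge_ruelle := supnorm_ruelle_le_koopman_mult_norm hmu hf.
split=> // /supnorm_ruelle_indep_first sup_ruelle.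
split; apply/le_anti/andP; split => //.
- by rewrite -sup_ruelle.
- by rewrite sup_ruelle.
Qed.
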